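(* Let $(r_i)_{i\ge1}$ be a strictly increasing sequence in $|\mathbf{F}^\times|$ with $r_i\to\infty$. Suppose that for each $i$ we are given $g_i\in\mathcal{A}^m(r_i)$, and for each $i<j$ a unit $u_{i,j}$ of $\mathcal{A}^m(r_i)$ such that $g_i=u_{i,j}g_j$ in $\mathcal{A}^m(r_i)$. Then there exist an entire function $G$ on $\mathbf{F}^m$ and units $v_i$ of $\mathcal{A}^m(r_i)$ such that $g_i=Gv_i$ in $\mathcal{A}^m(r_i)$ for every $i$.
   Context: $\mathbf{F}$ is an algebraically closed field complete with respect to a non-trivial non-Archimedean absolute value; $|\mathbf{F}^\times|$ is its value group. For $r\in|\mathbf{F}^\times|$, $\mathcal{A}^m(r)$ is the ring of power series $\sum_\gamma a_\gamma z^\gamma$ over $\mathbf{F}$ in $z=(z_1,\dots,z_m)$ with $|a_\gamma|r^{|\gamma|}\to0$ as $|\gamma|\to\infty$; for $r<R$ an element of $\mathcal{A}^m(R)$ is regarded as an element of $\mathcal{A}^m(r)$ by restriction. An entire function on $\mathbf{F}^m$ is a power series lying in $\mathcal{A}^m(r)$ for all $r\in|\mathbf{F}^\times|$. *)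

(* To avoid the clash between
   the %R delimiters of ring_scope and R_scope, real-number operations are
   written with their function names (Rle, Rlt, Rmult, pow, ...). *)
From Stdlib Require Import Reals.
From HB Require Import structures.
From mathcomp Require Import all_boot all_order all_algebra.

Set Implicit Arguments.
Unset Strict Implicit.
Unset Printing Implicit Defensive.

Import GRing.Theory.
Local Open Scope ring_scope.

Definition nonarch_abs (F : fieldType) (abs : F -> R) : Prop :=
  (forall x : F, Rle R0 (abs x)) /\
  (forall x : F, abs x = R0 <-> x = 0) /\
  (forall x y : F, abs (x * y) = Rmult (abs x) (abs y)) /\
  (forall x y : F, Rle (abs (x + y)) (Rmax (abs x) (abs y))).

Definition nontrivial_abs (F : fieldType) (abs : F -> R) : Prop :=
  exists x : F, x <> 0 /\ abs x <> R1.

Definition complete_abs (F : fieldType) (abs : F -> R) : Prop :=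
  forall s : nat -> F,
    (forall eps : R, Rlt R0 eps -> exists N : nat, forall n p : nat,
        leq N (n) -> leq N (p) -> Rlt (abs (s n - s p)) eps) ->
    exists l : F, forall eps : R, Rlt R0 eps -> exists N : nat, forall n : nat,
        leq N (n) -> Rlt (abs (s n - l)) eps.

Definition in_value_group (F : fieldType) (abs : F -> R) (r : R) : Prop :=
  exists x : F, x <> 0 /\ abs x = r.

Definition mindex (m : nat) := {ffun 'I_m -> nat}.

Definition mdeg (m : nat) (g : mindex m) : nat := (\sum_(i < m) g i)%N.

Definition pseries (F : Type) (m : nat) := mindex m -> F.

Definition mle (m : nat) (a b : mindex m) : bool := [forall i, (a i <= b i)%N].
Definition msub (m : nat) (b a : mindex m) : mindex m := [ffun i => (b i - a i)%N].

Definition mdivs (m : nat) (g : mindex m) : seq (mindex m) :=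
  [seq a <- map (fun f : {ffun 'I_m -> 'I_(mdeg g).+1} =>
                  ([ffun i => nat_of_ord (f i)] : mindex m))
                (enum {: {ffun 'I_m -> 'I_(mdeg g).+1}}) | mle a g].

Definition pmul (F : fieldType) (m : nat) (f g : pseries F m) : pseries F m :=
  fun c => (\sum_(a <- mdivs c) f a * g (msub c a)).

Definition pone (F : fieldType) (m : nat) : pseries F m :=
  fun c => if mdeg c == 0%N then 1 else 0.

Definition in_A (F : fieldType) (abs : F -> R) (m : nat) (r : R)
    (f : pseries F m) : Prop :=
  forall eps : R, Rlt R0 eps -> exists N : nat, forall c : mindex m,
    leq N (mdeg c) -> Rlt (Rmult (abs (f c)) (pow r (mdeg c))) eps.

Definition unit_A (F : fieldType) (abs : F -> R) (m : nat) (r : R)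
    (u : pseries F m) : Prop :=
  in_A abs r u /\ exists w : pseries F m, in_A abs r w /\ pmul u w = @pone F m.

Definition entire (F : fieldType) (abs : F -> R) (m : nat) (f : pseries F m) : Prop :=
  forall r : R, in_value_group abs r -> in_A abs r f.

(* Write [u_k] for [u_{k,k+1}] and [w_k] for its inverse in [A^m(r_k)]. A unit of [A^m(r)] is
   dominated by its constant term: [|u_c| r^|c| < |u_0|] for [c <> 0]. Hence, after dividing
   [u_k] by [u_k(0)] and rescaling [g_k] by [u_0(0) ... u_{k-1}(0)], all normalized units are
   [1 + (terms of weight <= r_i / r_k)] in [A^m(r_i)] for [i <= k]. Since [r_k -> oo], the
   ultrametric inequality makes [g_i w_i ... w_{k-1}] (the rescaled [g_k]) and the partial
   products [u_i ... u_{k-1}], [w_i ... w_{k-1}] converge coefficientwise, with limits in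
   [A^m(r_i)]; the first limit [G] does not depend on [i], so it is entire, and the other two
   give the unit [v_i] and its inverse. *)

From Stdlib Require Import Reals Lra FunctionalExtensionality ClassicalEpsilon.
From mathcomp Require Import all_boot all_order all_algebra.

Set Implicit Arguments.
Unset Strict Implicit.
Unset Printing Implicit Defensive.

Import GRing.Theory.

Lemma sum_digits_lt K n (x : nat -> nat) : 0 < K -> (forall i, i < n -> x i < K) ->
  \sum_(i < n) x i * K ^ i < K ^ n.
Proof.
move=> K_gt0; elim: n => [|n IHn] x_lt; first by rewrite big_ord0 expn0.
rewrite big_ord_recr /= expnS.
have lt_head : \sum_(i < n) x i * K ^ i < K ^ n.
  by apply: IHn => i lt_in; apply: x_lt; exact: ltnW.
apply: (@leq_trans (K ^ n + x n * K ^ n)); first by rewrite ltn_add2r.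
by rewrite -{1}(mul1n (K ^ n)) -mulnDl leq_mul2r add1n x_lt ?orbT.
Qed.

Lemma sum_digits_inj K n (x y : nat -> nat) : 0 < K ->
  (forall i, i < n -> x i < K) -> (forall i, i < n -> y i < K) ->
  \sum_(i < n) x i * K ^ i = \sum_(i < n) y i * K ^ i ->
  forall i, i < n -> x i = y i.
Proof.
move=> K_gt0; elim: n => [|n IHn] x_lt y_lt + i //.
rewrite !big_ord_recr /= => exy.
have Kn_gt0 : 0 < K ^ n by rewrite expn_gt0 K_gt0.
have x_lt' j : j < n -> x j < K by move=> ?; apply: x_lt; exact: ltnW.
have y_lt' j : j < n -> y j < K by move=> ?; apply: y_lt; exact: ltnW.
have exy_top : x n = y n.
  have := congr1 (fun t => t %/ K ^ n) exy => /=.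
  rewrite ![_ + _ * K ^ n]addnC !divnMDl //.
  by rewrite !divn_small ?addn0 //; apply: sum_digits_lt.
move: exy; rewrite exy_top => /addIn exy.
by rewrite ltnS leq_eqVlt => /orP [/eqP -> //|]; exact: IHn.
Qed.

Section MultiIndex.
Variable m : nat.
Implicit Types a b c d : mindex m.

Definition mzero : mindex m := [ffun _ => 0%N].
Definition madd a b : mindex m := [ffun i => (a i + b i)%N].

Definition mcode K c := (\sum_(i < m) c i * K ^ i)%N.

Definition mbox N : seq (mindex m) :=
  map (fun f : {ffun 'I_m -> 'I_N} => [ffun i => nat_of_ord (f i)] : mindex m)
      (enum {: {ffun 'I_m -> 'I_N}}).

Lemma mleP a b : reflect (forall i, a i <= b i)%N (mle a b).
Proof. exact: forallP. Qed.

Lemma mlexx c : mle c c.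
Proof. by apply/mleP. Qed.

Lemma mle_trans b a c : mle b a -> mle a c -> mle b c.
Proof. by move=> /mleP le_ba /mleP le_ac; apply/mleP => i; exact: leq_trans (le_ac i). Qed.

Lemma mle0m c : mle mzero c.
Proof. by apply/mleP => i; rewrite ffunE. Qed.

Lemma mle_maddr a b : mle a (madd a b).
Proof. by apply/mleP => i; rewrite ffunE leq_addr. Qed.

Lemma msub_mle a c : mle (msub c a) c.
Proof. by apply/mleP => i; rewrite ffunE leq_subr. Qed.

Lemma coord_le_mdeg c i : (c i <= mdeg c)%N.
Proof. by rewrite /mdeg (bigD1 i) //= leq_addr. Qed.

Lemma coord_lt_mdeg c N i : (mdeg c < N)%N -> (c i < N)%N.
Proof. exact: leq_ltn_trans (coord_le_mdeg c i). Qed.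

Lemma mle_mdeg a c : mle a c -> (mdeg a <= mdeg c)%N.
Proof. by move/mleP => le_ac; apply: leq_sum => i _. Qed.

Lemma mdeg_msub a c : mle a c -> (mdeg a + mdeg (msub c a))%N = mdeg c.
Proof.
by move/mleP => le_ac; rewrite /mdeg -big_split /=; apply: eq_bigr => i _; rewrite ffunE subnKC.
Qed.

Lemma mdeg_eq0 c : (mdeg c == 0%N) = (c == mzero).
Proof.
apply/idP/eqP => [deg0|->]; last by rewrite /mdeg big1 // => i _; rewrite ffunE.
apply/ffunP => i; rewrite ffunE; apply/eqP; rewrite -leqn0 -(eqP deg0).
exact: coord_le_mdeg.
Qed.

Lemma mdeg_mzero : mdeg mzero = 0%N.
Proof. by apply/eqP; rewrite mdeg_eq0. Qed.

Lemma mdeg_gt0 c : c <> mzero -> (0 < mdeg c)%N.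
Proof. by move=> nz_c; rewrite lt0n mdeg_eq0; apply/eqP. Qed.

Lemma msubmm c : msub c c = mzero.
Proof. by apply/ffunP => i; rewrite !ffunE subnn. Qed.

Lemma msubm0 c : msub c mzero = c.
Proof. by apply/ffunP => i; rewrite !ffunE subn0. Qed.

Lemma msubK a c : mle a c -> msub c (msub c a) = a.
Proof. by move/mleP => le_ac; apply/ffunP => i; rewrite !ffunE subKn. Qed.

Lemma msubKC a c : mle a c -> madd a (msub c a) = c.
Proof. by move/mleP => le_ac; apply/ffunP => i; rewrite !ffunE subnKC. Qed.

Lemma maddm0 a : madd a mzero = a.
Proof. by apply/ffunP => i; rewrite !ffunE addn0. Qed.

Lemma maddKl a b : msub (madd a b) a = b.
Proof. by apply/ffunP => i; rewrite !ffunE addKn. Qed.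

Lemma msub_madd a b c : msub c (madd a b) = msub (msub c a) b.
Proof. by apply/ffunP => i; rewrite !ffunE subnDA. Qed.

Lemma mem_mbox N c : (forall i, c i < N)%N -> c \in mbox N.
Proof.
move=> c_lt; apply/mapP; exists [ffun i => Ordinal (c_lt i)]; first by rewrite mem_enum.
by apply/ffunP => i; rewrite !ffunE.
Qed.

Lemma mdeg_mbox N c : (mdeg c < N)%N -> c \in mbox N.
Proof. by move=> lt_cN; apply: mem_mbox => i; exact: coord_lt_mdeg. Qed.

Lemma mem_mdivs a c : (a \in mdivs c) = mle a c.
Proof.
rewrite /mdivs mem_filter; case le_ac: (mle a c) => //=.
apply: mdeg_mbox; rewrite ltnS; exact: mle_mdeg.
Qed.

Lemma uniq_mdivs c : uniq (mdivs c).
Proof.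
rewrite filter_uniq // map_inj_uniq ?enum_uniq // => f1 f2 /ffunP eq_f.
by apply/ffunP => i; apply: val_inj; have := eq_f i; rewrite !ffunE.
Qed.

Lemma perm_mdivs_msub c : perm_eq (mdivs c) (map (msub c) (mdivs c)).
Proof.
apply: uniq_perm; first exact: uniq_mdivs.
  rewrite map_inj_in_uniq ?uniq_mdivs // => a b.
  by rewrite !mem_mdivs => le_ac le_bc eq_ab; rewrite -(msubK le_ac) -(msubK le_bc) eq_ab.
move=> a; apply/idP/mapP => [|[b _ ->]]; last by rewrite mem_mdivs msub_mle.
rewrite mem_mdivs => le_ac; exists (msub c a); last by rewrite msubK.
by rewrite mem_mdivs msub_mle.
Qed.

Lemma mcodeD K a b : mcode K (madd a b) = (mcode K a + mcode K b)%N.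
Proof. by rewrite /mcode -big_split; apply: eq_bigr => i _; rewrite ffunE mulnDl. Qed.

Lemma mcode_mzero K : mcode K mzero = 0%N.
Proof. by rewrite /mcode big1 // => i _; rewrite ffunE. Qed.

Lemma mcode_inj K a b : (0 < K)%N -> (forall i, a i < K)%N -> (forall i, b i < K)%N ->
  mcode K a = mcode K b -> a = b.
Proof.
move=> K_gt0 a_lt b_lt eq_code.
pose digit c (i : nat) := oapp c 0%N (insub i).
have digitE c : mcode K c = (\sum_(i < m) digit c i * K ^ i)%N.
  by apply: eq_bigr => i _; rewrite /digit valK.
have digit_lt c : (forall i, c i < K)%N -> forall i, (i < m)%N -> (digit c i < K)%N.
  by move=> c_lt i _; rewrite /digit; case: insubP => [j _ _|] /=.
apply/ffunP => i.
have := sum_digits_inj K_gt0 (digit_lt _ a_lt) (digit_lt _ b_lt) _ (ltn_ord i).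
by rewrite /digit valK; apply; rewrite -!digitE.
Qed.

End MultiIndex.

Local Open Scope ring_scope.

Section PowerSeries.
Variables (F : fieldType) (m : nat).
Implicit Types f g h : pseries F m.
Implicit Types a b c d : mindex m.

Definition pscale (s : F) f : pseries F m := fun c => s * f c.

Lemma mem_mdivs_pairs c a b :
  ((a, b) \in [seq (a, b) | a <- mdivs c, b <- mdivs a]) = mle b a && mle a c.
Proof.
apply/allpairsPdep/andP => [[a' [b' [+ + [-> ->]]]]|[le_ba le_ac]].
  by rewrite !mem_mdivs => *; split.
by exists a, b; rewrite !mem_mdivs.
Qed.

Lemma mem_mdivs_pairs_madd c a b :
  ((a, b) \in [seq (madd b d, b) | b <- mdivs c, d <- mdivs (msub c b)]) = mle b a && mle a c.
Proof.
apply/allpairsPdep/andP => [[b' [d [+ + [-> ->]]]]|[le_ba le_ac]].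
  rewrite !mem_mdivs => /mleP le_bc /mleP le_d; split; first exact: mle_maddr.
  apply/mleP => i; have := le_d i; rewrite !ffunE => le_di.
  by rewrite -(subnKC (le_bc i)) leq_add2l.
exists b, (msub a b); rewrite !mem_mdivs msubKC //; split=> //; first exact: mle_trans le_ac.
by apply/mleP => i; rewrite !ffunE leq_sub2r //; move/mleP: le_ac.
Qed.

Lemma perm_mdivs_pairs c :
  perm_eq [seq (a, b) | a <- mdivs c, b <- mdivs a]
          [seq (madd b d, b) | b <- mdivs c, d <- mdivs (msub c b)].
Proof.
apply: uniq_perm => [||[a b]]; last by rewrite mem_mdivs_pairs mem_mdivs_pairs_madd.
  apply: allpairs_uniq_dep => [||[a b] [a' b'] _ _ /= [eq_a eq_b]]; try exact: uniq_mdivs.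
    by move=> *; exact: uniq_mdivs.
  by subst.
apply: allpairs_uniq_dep => [||[b d] [b' d'] _ _ /= [+ eq_b]]; try exact: uniq_mdivs.
  by move=> *; exact: uniq_mdivs.
by subst => eq_add; rewrite -(maddKl b' d) eq_add maddKl.
Qed.

Lemma sum_mdivs_pairs c (K : mindex m -> mindex m -> F) :
  \sum_(a <- mdivs c) \sum_(b <- mdivs a) K b a =
  \sum_(b <- mdivs c) \sum_(d <- mdivs (msub c b)) K b (madd b d).
Proof.
transitivity (\sum_(p <- [seq (a, b) | a <- mdivs c, b <- mdivs a]) K p.2 p.1).
  by rewrite big_allpairs_dep.
by rewrite (perm_big _ (perm_mdivs_pairs c)) big_allpairs_dep.
Qed.

Lemma pmulC f g : pmul f g = pmul g f.
Proof.
apply: functional_extensionality => c.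
rewrite /pmul (perm_big _ (perm_mdivs_msub c)) big_map.
by apply: eq_big_seq => a; rewrite mem_mdivs => le_ac; rewrite msubK // mulrC.
Qed.

Lemma pmulA f g h : pmul f (pmul g h) = pmul (pmul f g) h.
Proof.
apply: functional_extensionality => c; rewrite /pmul.
under [RHS]eq_bigr do rewrite mulr_suml.
rewrite sum_mdivs_pairs; apply: eq_bigr => b _; rewrite mulr_sumr.
by apply: eq_bigr => d _; rewrite maddKl msub_madd mulrA.
Qed.

Lemma pmul_mzero f g : pmul f g (mzero m) = f (mzero m) * g (mzero m).
Proof.
rewrite /pmul (bigD1_seq (mzero m)) ?uniq_mdivs ?mem_mdivs ?mlexx //= msubmm.
rewrite big_seq_cond big1 ?addr0 // => a /andP [+ nz_a]; rewrite mem_mdivs => le_a0.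
case/eqP: nz_a; apply/ffunP => i; apply/eqP; rewrite ffunE -leqn0.
by move/mleP: le_a0 => /(_ i); rewrite ffunE.
Qed.

Lemma pone_mzero : @pone F m (mzero m) = 1.
Proof. by rewrite /pone mdeg_mzero. Qed.

Lemma pmul1l f : pmul (@pone F m) f = f.
Proof.
apply: functional_extensionality => c; rewrite /pmul.
rewrite (bigD1_seq (mzero m)) ?uniq_mdivs ?mem_mdivs ?mle0m //= pone_mzero mul1r msubm0.
rewrite big_seq_cond big1 ?addr0 // => a /andP [_ nz_a].
by rewrite /pone mdeg_eq0 (negbTE nz_a) mul0r.
Qed.

Lemma pmul1r f : pmul f (@pone F m) = f.
Proof. by rewrite pmulC pmul1l. Qed.

Lemma pscale1 f : pscale 1 f = f.
Proof. by apply: functional_extensionality => c; rewrite /pscale mul1r. Qed.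

Lemma pmulZl s f g : pmul (pscale s f) g = pscale s (pmul f g).
Proof.
apply: functional_extensionality => c; rewrite /pmul /pscale mulr_sumr.
by apply: eq_bigr => a _; rewrite mulrA.
Qed.

Lemma pmulZ s t f g : pmul (pscale s f) (pscale t g) = pscale (s * t) (pmul f g).
Proof.
apply: functional_extensionality => c; rewrite /pmul /pscale mulr_sumr.
by apply: eq_bigr => a _; rewrite mulrACA.
Qed.

End PowerSeries.

Section NonArchAbs.
Variables (F : fieldType) (abs : F -> R).
Hypothesis Habs : nonarch_abs abs.
Implicit Types x y z : F.

Lemma abs_ge0 x : Rle R0 (abs x).
Proof. by case: Habs. Qed.

Lemma abs_eq0 x : abs x = R0 <-> x = 0.
Proof. by case: Habs => _ []. Qed.

Lemma absM x y : abs (x * y) = Rmult (abs x) (abs y).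
Proof. by case: Habs => _ [_ []]. Qed.

Lemma abs_add_le_max x y : Rle (abs (x + y)) (Rmax (abs x) (abs y)).
Proof. by case: Habs => _ [_ [_]]. Qed.

Lemma abs0 : abs 0 = R0.
Proof. exact/abs_eq0. Qed.

Lemma abs_gt0 x : x <> 0 -> Rlt R0 (abs x).
Proof. by move=> nz_x; case: (Rle_lt_or_eq_dec _ _ (abs_ge0 x)) => // /esym/abs_eq0. Qed.

Lemma abs1 : abs 1 = R1.
Proof.
have := absM 1 1; rewrite mulr1 => abs1_sq.
have /abs_gt0 abs1_gt0 : (1 : F) <> 0 by apply/eqP; exact: oner_neq0.
nra.
Qed.

Lemma absN x : abs (- x) = abs x.
Proof.
have absN1 : abs (-1) = R1.
  have := absM (-1) (-1); rewrite mulrNN mulr1 abs1 => sq1.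
  have := abs_ge0 (-1); nra.
by rewrite -mulN1r absM absN1 Rmult_1_l.
Qed.

Lemma abs_subC x y : abs (x - y) = abs (y - x).
Proof. by rewrite -absN opprB. Qed.

Lemma absV x : x <> 0 -> abs x^-1 = Rinv (abs x).
Proof.
move=> nz_x; have := absM x x^-1; rewrite mulfV ?abs1; last exact/eqP.
have := abs_gt0 nz_x => abs_x_gt0 prod1.
by apply: (Rmult_eq_reg_l (abs x)); [rewrite -prod1 Rinv_r; lra | lra].
Qed.

Lemma abs_sub_le_max x y z : Rle (abs (x - z)) (Rmax (abs (x - y)) (abs (y - z))).
Proof. by rewrite -(subrKA y x (- z)); exact: abs_add_le_max. Qed.

Lemma abs_add_eq_l x y : Rlt (abs y) (abs x) -> abs (x + y) = abs x.
Proof.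
move=> lt_yx; have := abs_add_le_max x y.
have := abs_add_le_max (x + y) (- y); rewrite addrK absN.
rewrite /Rmax; repeat case: Rle_dec; lra.
Qed.

Lemma abs_sub_mulr_le x y z (K D : R) : Rle R0 K ->
  Rle (Rmult (abs (x - y)) K) D -> Rle (Rmult (abs (y - z)) K) D ->
  Rle (Rmult (abs (x - z)) K) D.
Proof.
move=> K_ge0 le_xy le_yz.
apply: Rle_trans (Rmult_le_compat_r _ _ _ K_ge0 (abs_sub_le_max x y z)) _.
by rewrite /Rmax; case: Rle_dec.
Qed.

Lemma abs_sum_mulr_le (I : eqType) (s : seq I) (G : I -> F) (K D : R) :
  Rle R0 K -> Rle R0 D ->
  (forall a, a \in s -> Rle (Rmult (abs (G a)) K) D) ->
  Rle (Rmult (abs (\sum_(a <- s) G a)) K) D.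
Proof.
move=> K_ge0 D_ge0; elim: s => [|a s IHs] le_G; first by rewrite big_nil abs0 Rmult_0_l.
have le_a : Rle (Rmult (abs (G a)) K) D by apply: le_G; rewrite mem_head.
have le_s : Rle (Rmult (abs (\sum_(b <- s) G b)) K) D.
  by apply: IHs => b s_b; apply: le_G; rewrite inE s_b orbT.
rewrite big_cons; apply: Rle_trans (Rmult_le_compat_r _ _ _ K_ge0 (abs_add_le_max _ _)) _.
by rewrite /Rmax; case: Rle_dec.
Qed.

Lemma abs_sum_lt (I : eqType) (s : seq I) (G : I -> F) (D : R) :
  Rlt R0 D -> (forall a, a \in s -> Rlt (abs (G a)) D) -> Rlt (abs (\sum_(a <- s) G a)) D.
Proof.
move=> D_gt0; elim: s => [|a s IHs] lt_G; first by rewrite big_nil abs0.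
have lt_a : Rlt (abs (G a)) D by apply: lt_G; rewrite mem_head.
have lt_s : Rlt (abs (\sum_(b <- s) G b)) D.
  by apply: IHs => b s_b; apply: lt_G; rewrite inE s_b orbT.
by rewrite big_cons; apply: Rle_lt_trans (abs_add_le_max _ _) _; rewrite /Rmax; case: Rle_dec.
Qed.

End NonArchAbs.

Lemma seq_bounded (I : eqType) (s : seq I) (w : I -> R) :
  exists B, Rle R0 B /\ forall a, a \in s -> Rle (w a) B.
Proof.
elim: s => [|a s [B [B_ge0 le_wB]]]; first by exists R0; split; [exact: Rle_refl|].
exists (Rmax B (w a)); split; first exact: Rle_trans B_ge0 (Rmax_l _ _).
move=> b; rewrite inE => /orP [/eqP ->|s_b]; first exact: Rmax_r.
exact: Rle_trans (le_wB b s_b) (Rmax_l _ _).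
Qed.

Lemma seq_argmax (I : eqType) (s : seq I) (w : I -> R) (a0 : I) : a0 \in s ->
  exists2 a, a \in s & forall b, b \in s -> Rle (w b) (w a).
Proof.
elim: s a0 => [//|a [|a' s] IHs] a0 _.
  by exists a; rewrite ?mem_head // => b; rewrite mem_seq1 => /eqP ->; exact: Rle_refl.
have [b s_b max_b] := IHs a' (mem_head _ _).
have [le_ab|lt_ba] := Rle_dec (w a) (w b).
  exists b; first by rewrite inE s_b orbT.
  by move=> c; rewrite inE => /orP [/eqP ->|/max_b].
exists a; first exact: mem_head.
move=> c; rewrite inE => /orP [/eqP ->|/max_b le_cb]; [exact: Rle_refl | lra].
Qed.

Lemma seq_argmaxn (I : eqType) (s : seq I) (w : I -> nat) (a0 : I) : a0 \in s ->
  exists2 a, a \in s & forall b, b \in s -> (w b <= w a)%N.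
Proof.
move=> s_a0; have [a s_a max_a] := seq_argmax (fun b => INR (w b)) s_a0.
by exists a => // b /max_a /INR_le /leP.
Qed.

Section Weights.
Variables (F : fieldType) (abs : F -> R).
Hypothesis Habs : nonarch_abs abs.
Variable m : nat.
Implicit Types f g h : pseries F m.
Implicit Types a b c d : mindex m.

Definition pweight (r : R) f c := Rmult (abs (f c)) (pow r (mdeg c)).

Lemma pweight_ge0 r f c : Rle R0 r -> Rle R0 (pweight r f c).
Proof. by move=> r_ge0; apply: Rmult_le_pos; [exact: abs_ge0 | exact: pow_le]. Qed.

Lemma pweight_mzero r f : pweight r f (mzero m) = abs (f (mzero m)).
Proof. by rewrite /pweight mdeg_mzero Rmult_1_r. Qed.

Lemma pweight_pone_le1 r c : Rle (pweight r (@pone F m) c) R1.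
Proof.
rewrite /pweight /pone; case: eqP => [->|_]; first by rewrite abs1 // Rmult_1_r; exact: Rle_refl.
by rewrite abs0 // Rmult_0_l; exact: Rle_0_1.
Qed.

Lemma pweight_mul_term r f g a c : mle a c ->
  Rmult (abs (f a * g (msub c a))) (pow r (mdeg c)) =
  Rmult (pweight r f a) (pweight r g (msub c a)).
Proof. by move=> le_ac; rewrite /pweight absM // -(mdeg_msub le_ac) pow_add; ring. Qed.

Lemma pweight_pmul_le r f g A B : Rle R0 r -> Rle R0 A -> Rle R0 B ->
  (forall c, Rle (pweight r f c) A) -> (forall c, Rle (pweight r g c) B) ->
  forall c, Rle (pweight r (pmul f g) c) (Rmult A B).
Proof.
move=> r_ge0 A_ge0 B_ge0 le_fA le_gB c.
apply: abs_sum_mulr_le => //; [exact: pow_le | exact: Rmult_le_pos |].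
move=> a; rewrite mem_mdivs => le_ac; rewrite pweight_mul_term //.
by apply: Rmult_le_compat; [exact: pweight_ge0 | exact: pweight_ge0 | |].
Qed.

Lemma pmul_near_one r f X B dl : Rle R0 r -> Rle R0 B -> Rle R0 dl ->
  (forall c, Rle (pweight r f c) B) -> X (mzero m) = 1 ->
  (forall d, d <> mzero m -> Rle (pweight r X d) dl) ->
  forall c, Rle (Rmult (abs (pmul f X c - f c)) (pow r (mdeg c))) (Rmult B dl).
Proof.
move=> r_ge0 B_ge0 dl_ge0 le_fB X0 le_Xdl c; rewrite /pmul.
rewrite (bigD1_seq c) ?uniq_mdivs ?mem_mdivs ?mlexx //= msubmm X0 mulr1 addrC addrK.
rewrite -big_filter; apply: abs_sum_mulr_le => //; [exact: pow_le | exact: Rmult_le_pos |].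
move=> a; rewrite mem_filter mem_mdivs => /andP [ne_ac le_ac].
rewrite pweight_mul_term //.
apply: Rmult_le_compat; [exact: pweight_ge0 | exact: pweight_ge0 | exact: le_fB |].
apply: le_Xdl => /(congr1 (madd a)); rewrite msubKC // maddm0 => eq_ca.
by rewrite eq_ca eqxx in ne_ac.
Qed.

Lemma pweight_shrink r rho f d : Rlt R0 r -> Rle r rho -> Rle (pweight rho f d) R1 ->
  d <> mzero m -> Rle (pweight r f d) (Rdiv r rho).
Proof.
move=> r_gt0 le_r_rho le_f1 /mdeg_gt0.
set q := Rdiv r rho; set n := mdeg d.
have q_ge0 : Rle R0 q by apply: Rlt_le; apply: Rdiv_lt_0_compat; lra.
have q_le1 : Rle q R1.
  by apply: (Rmult_le_reg_r rho); [lra | rewrite /q /Rdiv Rmult_assoc Rinv_l; lra].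
have -> : pweight r f d = Rmult (pweight rho f d) (pow q n).
  rewrite /pweight -/n {1}(_ : r = Rmult rho q) ?Rpow_mult_distr; first ring.
  by rewrite /q; field; lra.
case: n => // n _; have := pow_incr q R1 n (conj q_ge0 q_le1); rewrite pow1 /=.
have := pow_le q n q_ge0; have := pweight_ge0 f d (Rlt_le _ _ (Rlt_le_trans _ _ _ r_gt0 le_r_rho)).
move: le_f1; set w := pweight rho f d => le_w1 w_ge0 qn_ge0 qn_le1.
have : Rle (Rmult w (pow q n)) R1 by nra.
nra.
Qed.

Lemma in_A_bounded r f : Rle R0 r -> in_A abs r f ->
  exists B, Rle R0 B /\ forall c, Rle (pweight r f c) B.
Proof.
move=> r_ge0 f_in; have [N tail_f] := f_in R1 Rlt_0_1.
have [B [B_ge0 le_box]] := seq_bounded (mbox m N) (pweight r f).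
exists (Rmax R1 B); split; first exact: Rle_trans (Rmax_r _ _).
move=> c; case: (leqP N (mdeg c)) => [/tail_f lt_c1|/mdeg_mbox box_c].
  by apply: Rle_trans (Rmax_l _ _); apply: Rlt_le.
exact: Rle_trans (le_box c box_c) (Rmax_r _ _).
Qed.

Lemma in_A_le r r' f : Rle R0 r -> Rle r r' -> in_A abs r' f -> in_A abs r f.
Proof.
move=> r_ge0 le_rr' f_in eps eps_gt0; have [N tail_f] := f_in eps eps_gt0.
exists N => c /tail_f; apply: Rle_lt_trans; apply: Rmult_le_compat_l; first exact: abs_ge0.
by apply: pow_incr; split.
Qed.

Lemma in_A_pscale r s f : in_A abs r f -> in_A abs r (pscale s f).
Proof.
move=> f_in eps eps_gt0; have s_ge0 := abs_ge0 Habs s.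
have [N tail_f] : exists N, forall c, (N <= mdeg c)%N ->
    Rlt (Rmult (abs (f c)) (pow r (mdeg c))) (Rdiv eps (Rplus (abs s) R1)).
  by apply: f_in; apply: Rdiv_lt_0_compat; lra.
exists N => c /tail_f; rewrite /pscale absM // Rmult_assoc.
set t := Rmult (abs (f c)) _ => lt_t.
have -> : eps = Rmult (Rdiv eps (Rplus (abs s) R1)) (Rplus (abs s) R1) by field; lra.
have : Rlt R0 (Rdiv eps (Rplus (abs s) R1)) by apply: Rdiv_lt_0_compat; lra.
nra.
Qed.

Lemma in_A_pone r : in_A abs r (@pone F m).
Proof.
move=> eps eps_gt0; exists 1%N => c; rewrite /pone; case: eqP => [->//|_ _].
by rewrite abs0 // Rmult_0_l.
Qed.

Lemma in_A_pmul r f g : Rle R0 r -> in_A abs r f -> in_A abs r g -> in_A abs r (pmul f g).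
Proof.
move=> r_ge0 f_in g_in eps eps_gt0.
have [A [A_ge0 le_fA]] := in_A_bounded r_ge0 f_in.
have [B [B_ge0 le_gB]] := in_A_bounded r_ge0 g_in.
set e1 := Rdiv eps (Rmult 2 (Rplus B R1)); set e2 := Rdiv eps (Rmult 2 (Rplus A R1)).
have e1_gt0 : Rlt R0 e1 by apply: Rdiv_lt_0_compat; lra.
have e2_gt0 : Rlt R0 e2 by apply: Rdiv_lt_0_compat; lra.
have eps_e1 : eps = Rmult e1 (Rmult 2 (Rplus B R1)) by rewrite /e1; field; lra.
have eps_e2 : eps = Rmult e2 (Rmult 2 (Rplus A R1)) by rewrite /e2; field; lra.
have [N1 tail_f] := f_in _ e1_gt0; have [N2 tail_g] := g_in _ e2_gt0.
exists (N1 + N2)%N => c le_Nc; apply: (@Rle_lt_trans _ (Rdiv eps 2)); last lra.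
apply: abs_sum_mulr_le => //; [exact: pow_le | lra |].
move=> a; rewrite mem_mdivs => le_ac; rewrite pweight_mul_term //.
have := pweight_ge0 f a r_ge0; have := pweight_ge0 g (msub c a) r_ge0.
have := le_fA a; have := le_gB (msub c a).
(* [mdeg a + mdeg (c - a) >= N1 + N2], so one of the two factors lies in its tail. *)
case: (leqP N1 (mdeg a)) => [/tail_f|lt_a].
  rewrite -/(pweight r f a) => small_f *.
  have : Rle (Rmult (pweight r f a) (pweight r g (msub c a))) (Rmult e1 B).
    by apply: Rmult_le_compat; lra.
  by rewrite eps_e1; nra.
have /tail_g : (N2 <= mdeg (msub c a))%N.
  rewrite -(leq_add2l N1); apply: leq_trans le_Nc _.
  by rewrite -(mdeg_msub le_ac) leq_add2r ltnW.
rewrite -/(pweight r g (msub c a)) => small_g *.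
have : Rle (Rmult (pweight r f a) (pweight r g (msub c a))) (Rmult A e2).
  by apply: Rmult_le_compat; lra.
by rewrite eps_e2; nra.
Qed.

End Weights.

Section Dominance.
Variables (F : fieldType) (abs : F -> R).
Hypothesis Habs : nonarch_abs abs.
Variable m : nat.
Implicit Types f g u w : pseries F m.
Implicit Types a b c d : mindex m.

Lemma pweight_max_exists r f : Rlt R0 r -> in_A abs r f -> f (mzero m) <> 0 ->
  exists N a, [/\ (0 < N)%N, Rlt R0 (pweight abs r f a),
                 forall c, Rle (pweight abs r f c) (pweight abs r f a)
               & forall c, pweight abs r f c = pweight abs r f a -> (mdeg c < N)%N].
Proof.
move=> r_gt0 f_in nz_f0; have f0_gt0 := abs_gt0 Habs nz_f0.
have [N tail_f] := f_in _ f0_gt0.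
have small_tail c : (N <= mdeg c)%N -> Rlt (pweight abs r f c) (pweight abs r f (mzero m)).
  by rewrite pweight_mzero; exact: tail_f.
have N_gt0 : (0 < N)%N.
  by case: N small_tail {tail_f} => // /(_ (mzero m) (leq0n _)) /Rlt_irrefl.
have box0 : mzero m \in mbox m N by apply: mdeg_mbox; rewrite mdeg_mzero.
have [a box_a max_a] := seq_argmax (pweight abs r f) box0.
have le_max c : Rle (pweight abs r f c) (pweight abs r f a).
  case: (leqP N (mdeg c)) => [/small_tail lt_c0|/mdeg_mbox/max_a //].
  by apply: Rlt_le; apply: Rlt_le_trans lt_c0 (max_a _ box0).
exists N, a; split => //.
- by apply: Rlt_le_trans f0_gt0 _; rewrite -(pweight_mzero abs r f); exact: le_max.
- move=> c eq_ca; case: (leqP N (mdeg c)) => // /small_tail.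
  by rewrite eq_ca => /(Rlt_not_le _ _); case; exact: le_max.
Qed.

Lemma mcode_argmax (P : mindex m -> Prop) N K a0 : P a0 -> (forall c, P c -> (mdeg c < N)%N) ->
  exists2 a, P a & forall a', P a' -> (mcode K a' <= mcode K a)%N.
Proof.
move=> P_a0 P_deg.
pose Pb c := if excluded_middle_informative (P c) then true else false.
have PbP c : reflect (P c) (Pb c) by rewrite /Pb; case: excluded_middle_informative; constructor.
have mem_P c : P c -> c \in [seq c <- mbox m N | Pb c].
  by move=> P_c; rewrite mem_filter mdeg_mbox ?P_deg //; apply/andP; split => //; exact/PbP.
have [a] := seq_argmaxn (mcode K) (mem_P _ P_a0).
rewrite mem_filter => /andP [/PbP P_a _] max_a.
by exists a => // a' /mem_P; exact: max_a.
Qed.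

Section TopTerm.
Variables (r : R) (u w : pseries F m) (Nu Nw : nat) (Mu Mw : R) (a b : mindex m).
Hypotheses (r_gt0 : Rlt R0 r) (Mu_gt0 : Rlt R0 Mu) (Mw_gt0 : Rlt R0 Mw).
Hypotheses (le_u : forall c, Rle (pweight abs r u c) Mu)
           (le_w : forall c, Rle (pweight abs r w c) Mw).
Hypothesis deg_u : forall c, pweight abs r u c = Mu -> (mdeg c < Nu)%N.
Let K := (Nu + Nw)%N.
Hypotheses (top_a : pweight abs r u a = Mu)
           (max_a : forall a', pweight abs r u a' = Mu -> (mcode K a' <= mcode K a)%N).
Hypotheses (top_b : pweight abs r w b = Mw)
           (max_b : forall b', pweight abs r w b' = Mw -> (mcode K b' <= mcode K b)%N).

Lemma pweight_term_lt_top a' : mle a' (madd a b) -> a' <> a ->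
  Rlt (Rmult (abs (u a' * w (msub (madd a b) a'))) (pow r (mdeg (madd a b)))) (Rmult Mu Mw).
Proof.
move=> le_a' ne_a'; rewrite (pweight_mul_term Habs) //.
set c' := msub (madd a b) a'.
have := pweight_ge0 Habs u a' (Rlt_le _ _ r_gt0); have := pweight_ge0 Habs w c' (Rlt_le _ _ r_gt0).
have := le_u a'; have := le_w c'.
case: (Req_EM_T (pweight abs r u a') Mu) => [top_a'|]; last by move=> *; nra.
case: (Req_EM_T (pweight abs r w c') Mw) => [top_c'|]; last by move=> *; nra.
case: ne_a'; apply: (@mcode_inj _ K); first by rewrite addn_gt0 (leq_ltn_trans _ (deg_u top_a)).
- by move=> i; apply: leq_trans (leq_addr Nw _); exact: coord_lt_mdeg (deg_u top_a').
- by move=> i; apply: leq_trans (leq_addr Nw _); exact: coord_lt_mdeg (deg_u top_a).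
have := max_a top_a'; have := max_b top_c'.
have := congr1 (mcode K) (msubKC le_a'); rewrite !mcodeD.
move=> sum_eq le_c' le_a'a; apply/eqP; rewrite eqn_leq le_a'a.
by rewrite -(leq_add2r (mcode K c')) sum_eq leq_add2l.
Qed.

Lemma pweight_pmul_top : pweight abs r (pmul u w) (madd a b) = Rmult Mu Mw.
Proof.
have rc_gt0 : Rlt R0 (pow r (mdeg (madd a b))) by apply: pow_lt.
have top : Rmult (abs (u a * w b)) (pow r (mdeg (madd a b))) = Rmult Mu Mw.
  by rewrite -{1}(maddKl a b) (pweight_mul_term Habs) ?mle_maddr // maddKl top_a top_b.
have top_gt0 : Rlt R0 (abs (u a * w b)).
  by apply: (Rmult_lt_reg_r _ _ _ rc_gt0); rewrite top Rmult_0_l; exact: Rmult_lt_0_compat.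
rewrite /pweight /pmul (bigD1_seq a) ?uniq_mdivs ?mem_mdivs ?mle_maddr //= maddKl.
rewrite (abs_add_eq_l Habs) // -big_filter; apply: (abs_sum_lt Habs) => // a'.
rewrite mem_filter mem_mdivs => /andP [ne_a' le_a'].
apply: (Rmult_lt_reg_r _ _ _ rc_gt0); rewrite top; apply: pweight_term_lt_top => //.
exact/eqP.
Qed.

End TopTerm.

Lemma unit_mzero u w : pmul u w = @pone F m -> u (mzero m) * w (mzero m) = 1.
Proof. by move=> uw1; rewrite -pmul_mzero uw1 pone_mzero. Qed.

Lemma unit_mzero_neq0 u w : pmul u w = @pone F m -> u (mzero m) <> 0.
Proof.
by move=> /unit_mzero uw1 u0; move: uw1; rewrite u0 mul0r => /eqP; rewrite eq_sym oner_eq0.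
Qed.

(* Pick top-weight coefficients of [u] and [w] maximal for the base-[K] encoding [mcode]: their
   product is then the only top-weight term of its coefficient in [u w = 1], so both sit at [0]. *)
Lemma unit_pweight_lt r u w : Rlt R0 r -> in_A abs r u -> in_A abs r w ->
  pmul u w = @pone F m ->
  forall c, c <> mzero m -> Rlt (pweight abs r u c) (abs (u (mzero m))).
Proof.
move=> r_gt0 u_in w_in uw1.
have nz_u0 := unit_mzero_neq0 uw1.
have nz_w0 : w (mzero m) <> 0 by apply: (@unit_mzero_neq0 _ u); rewrite pmulC.
have [Nu [a0 [Nu_gt0 Mu_gt0 le_u deg_u]]] := pweight_max_exists r_gt0 u_in nz_u0.
have [Nw [b0 [Nw_gt0 Mw_gt0 le_w deg_w]]] := pweight_max_exists r_gt0 w_in nz_w0.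
set K := (Nu + Nw)%N.
have [a top_a max_a] :=
  @mcode_argmax (fun c => pweight abs r u c = pweight abs r u a0) Nu K a0 (erefl _) deg_u.
have [b top_b max_b] :=
  @mcode_argmax (fun c => pweight abs r w c = pweight abs r w b0) Nw K b0 (erefl _) deg_w.
have := pweight_pmul_top r_gt0 Mu_gt0 Mw_gt0 le_u le_w deg_u top_a max_a top_b max_b.
rewrite uw1 => top.
have ab_0 : madd a b = mzero m.
  apply/eqP; rewrite -mdeg_eq0; apply: contraT => nz_ab; exfalso.
  move: top; rewrite /pweight /pone (negbTE nz_ab) abs0 // Rmult_0_l.
  by have := Rmult_lt_0_compat _ _ Mu_gt0 Mw_gt0; rewrite /pweight; lra.
have a_0 : a = mzero m.
  by apply/ffunP => i; have := congr1 (fun c : mindex m => c i) ab_0; rewrite !ffunE; case: (a i).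
move=> c nz_c; rewrite -(pweight_mzero abs r u) -a_0 top_a.
case: (Req_EM_T (pweight abs r u c) (pweight abs r u a0)) => [top_c|]; last by have := le_u c; lra.
case: nz_c; apply: (@mcode_inj _ K).
- by rewrite addn_gt0 Nu_gt0.
- by move=> i; apply: leq_trans (leq_addr Nw _); exact: coord_lt_mdeg (deg_u _ top_c).
- by move=> i; rewrite ffunE addn_gt0 Nu_gt0.
- by apply/eqP; rewrite mcode_mzero -leqn0 -(mcode_mzero m K) -a_0; exact: max_a.
Qed.

End Dominance.

Section Convergence.
Variables (F : fieldType) (abs : F -> R).
Hypothesis Habs : nonarch_abs abs.
Implicit Types (s t : nat -> F) (x y l : F).

Definition converges s l := forall eps, Rlt R0 eps ->
  exists N, forall n, (N <= n)%N -> Rlt (abs (s n - l)) eps.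

Lemma converges_cst x : converges (fun _ => x) x.
Proof. by move=> eps eps_gt0; exists 0%N => n _; rewrite subrr abs0. Qed.

Lemma converges_unique s l1 l2 : converges s l1 -> converges s l2 -> l1 = l2.
Proof.
move=> cv1 cv2; apply/eqP; rewrite -subr_eq0; apply/eqP/(abs_eq0 Habs).
apply: Rle_antisym; last exact: abs_ge0.
apply: Rnot_lt_le => dist_gt0.
have [N1 near1] := cv1 _ dist_gt0; have [N2 near2] := cv2 _ dist_gt0.
have := near1 _ (leq_addr N2 N1); have := near2 _ (leq_addl N1 N2).
have := abs_sub_le_max Habs l1 (s (N1 + N2)%N) l2; rewrite (abs_subC Habs l1 (s _)).
move: dist_gt0; set d := abs (l1 - l2).
by rewrite /Rmax; case: Rle_dec => _; lra.
Qed.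

Lemma converges_shift s l i : converges s l -> converges (fun n => s (i + n)%N) l.
Proof.
move=> cv_s eps eps_gt0; have [N near] := cv_s _ eps_gt0.
by exists N => n le_Nn; apply: near; exact: leq_trans le_Nn (leq_addl _ _).
Qed.

Lemma convergesD s t x y : converges s x -> converges t y -> converges (fun n => s n + t n) (x + y).
Proof.
move=> cv_s cv_t eps eps_gt0.
have [N1 near_s] := cv_s _ eps_gt0; have [N2 near_t] := cv_t _ eps_gt0.
exists (N1 + N2)%N => n le_n; rewrite opprD addrACA.
apply: Rle_lt_trans (abs_add_le_max Habs _ _) _.
by apply: Rmax_lub_lt; [apply: near_s | apply: near_t]; apply: leq_trans le_n;
  [exact: leq_addr | exact: leq_addl].
Qed.

Lemma convergesM s t x y : converges s x -> converges t y -> converges (fun n => s n * t n) (x * y).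
Proof.
move=> cv_s cv_t eps eps_gt0.
set X := abs x; set Y := abs y.
have X_ge0 : Rle R0 X by exact: abs_ge0.
have Y_ge0 : Rle R0 Y by exact: abs_ge0.
set e1 := Rdiv eps (Rplus Y R1); set e2 := Rmin R1 (Rdiv eps (Rplus X R1)).
have e1_gt0 : Rlt R0 e1 by apply: Rdiv_lt_0_compat; lra.
have e2_gt0 : Rlt R0 e2 by apply: Rmin_pos; [lra | apply: Rdiv_lt_0_compat; lra].
have eps_e1 : eps = Rmult e1 (Rplus Y R1) by rewrite /e1; field; lra.
have le_e2X : Rle (Rmult e2 (Rplus X R1)) eps.
  apply: Rle_trans (Rmult_le_compat_r _ _ _ _ (Rmin_r _ _)) _; first lra.
  by right; field; lra.
have e2_le1 : Rle e2 R1 by exact: Rmin_l.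
have [N1 near_s] := cv_s _ e1_gt0; have [N2 near_t] := cv_t _ e2_gt0.
exists (N1 + N2)%N => n le_n.
have := near_s n (leq_trans (leq_addr _ _) le_n); have := near_t n (leq_trans (leq_addl _ _) le_n).
have -> : s n * t n - x * y = (s n - x) * t n + x * (t n - y).
  by rewrite mulrBl mulrBr addrA subrK.
move=> near_tn near_sn.
have le_tn : Rle (abs (t n)) (Rplus Y R1).
  have := abs_add_le_max Habs (t n - y) y; rewrite subrK -/Y.
  by rewrite /Rmax; case: Rle_dec => _; lra.
apply: Rle_lt_trans (abs_add_le_max Habs _ _) _; rewrite !(absM Habs) -/X.
have := abs_ge0 Habs (s n - x); have := abs_ge0 Habs (t n - y); have := abs_ge0 Habs (t n).
move=> *; apply: Rmax_lub_lt.
  apply: (@Rle_lt_trans _ (Rmult (abs (s n - x)) (Rplus Y R1))); first exact: Rmult_le_compat_l.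
  by rewrite eps_e1; apply: Rmult_lt_compat_r; lra.
by apply: (@Rle_lt_trans _ (Rmult X e2)); [apply: Rmult_le_compat_l; lra | nra].
Qed.

Lemma converges_sum (I : Type) (r : seq I) (G : I -> nat -> F) (L : I -> F) :
  (forall a, converges (G a) (L a)) ->
  converges (fun n => \sum_(a <- r) G a n) (\sum_(a <- r) L a).
Proof.
move=> cv_G; elim: r => [|a r IHr].
  by move=> eps eps_gt0; exists 0%N => n _; rewrite !big_nil subrr abs0.
move=> eps eps_gt0; have [N near] := convergesD (cv_G a) IHr eps_gt0.
by exists N => n le_n; rewrite !big_cons; exact: near.
Qed.

Lemma converges_dist_le s l n N (D : R) : converges s l ->
  (forall p, (N <= p)%N -> Rle (abs (s n - s p)) D) -> Rle (abs (s n - l)) D.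
Proof.
move=> cv_s le_D; apply: Rnot_lt_le => lt_D.
have [N' near] := cv_s (Rminus (abs (s n - l)) D) ltac:(lra).
have := near _ (leq_addr N N'); have := le_D _ (leq_addl N' N).
have := abs_sub_le_max Habs (s n) (s (N' + N)%N) l.
have := abs_ge0 Habs (s n - s (N' + N)%N).
by rewrite /Rmax; case: Rle_dec => _; lra.
Qed.

Lemma converges_pmul m (fs gs : nat -> pseries F m) (f g : pseries F m) :
  (forall c, converges (fun n => fs n c) (f c)) -> (forall c, converges (fun n => gs n c) (g c)) ->
  forall c, converges (fun n => pmul (fs n) (gs n) c) (pmul f g c).
Proof.
move=> cv_f cv_g c; apply: (@converges_sum _ _ (fun a n => fs n a * gs n (msub c a))) => a.
exact: convergesM.
Qed.

Lemma converges_pmul_const m (fs gs : nat -> pseries F m) (f g h : pseries F m) :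
  (forall c, converges (fun n => fs n c) (f c)) -> (forall c, converges (fun n => gs n c) (g c)) ->
  (forall n, pmul (fs n) (gs n) = h) -> pmul f g = h.
Proof.
move=> cv_f cv_g fg_h; apply: functional_extensionality => c.
have := converges_pmul cv_f cv_g c.
have -> : (fun n => pmul (fs n) (gs n) c) = (fun _ => h c).
  by apply: functional_extensionality => n; rewrite fg_h.
by move/converges_unique; apply; exact: converges_cst.
Qed.

End Convergence.

Section IteratedProduct.
Variables (F : fieldType) (abs : F -> R).
Hypothesis Habs : nonarch_abs abs.
Variables (m : nat) (r : R) (S X : nat -> pseries F m) (B : R) (dl : nat -> R).
Hypotheses (r_gt0 : Rlt R0 r) (B_ge0 : Rle R0 B).
Hypotheses (dl_ge0 : forall n, Rle R0 (dl n)) (dl_le1 : forall n, Rle (dl n) R1)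
           (dl_noninc : forall n p, (n <= p)%N -> Rle (dl p) (dl n)).
Hypotheses (S_succ : forall n, S n.+1 = pmul (S n) (X n))
           (X_mzero : forall n, X n (mzero m) = 1)
           (X_small : forall n d, d <> mzero m -> Rle (pweight abs r (X n) d) (dl n))
           (S0_le : forall c, Rle (pweight abs r (S 0) c) B).

Lemma pweight_iter_le n c : Rle (pweight abs r (S n) c) B.
Proof.
elim: n c => [|n IHn] c; first exact: S0_le.
rewrite S_succ -(Rmult_1_r B); apply: (pweight_pmul_le Habs) => //; try lra.
move=> d; case: (eqVneq d (mzero m)) => [->|/eqP nz_d].
  by rewrite pweight_mzero X_mzero abs1 //; exact: Rle_refl.
exact: Rle_trans (X_small n nz_d) (dl_le1 n).
Qed.

Lemma iter_dist_le n k c :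
  Rle (Rmult (abs (S (n + k)%N c - S n c)) (pow r (mdeg c))) (Rmult B (dl n)).
Proof.
have rc_ge0 : Rle R0 (pow r (mdeg c)) by apply: pow_le; lra.
elim: k => [|k IHk]; first by rewrite addn0 subrr abs0 // Rmult_0_l; apply: Rmult_le_pos.
rewrite addnS; apply: (abs_sub_mulr_le Habs (y := S (n + k)%N c)) => //.
rewrite S_succ; apply: Rle_trans (pmul_near_one Habs _ _ _ (pweight_iter_le _) _ _ c) _ => //.
- exact: Rlt_le.
- exact: X_small.
- by apply: Rmult_le_compat_l => //; apply: dl_noninc; exact: leq_addr.
Qed.

Lemma iter_limit_dist_le (L : pseries F m) : (forall c, converges abs (fun p => S p c) (L c)) ->
  forall n c, Rle (Rmult (abs (L c - S n c)) (pow r (mdeg c))) (Rmult B (dl n)).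
Proof.
move=> cv_S n c; have rc_gt0 : Rlt R0 (pow r (mdeg c)) by apply: pow_lt.
apply: (Rmult_le_reg_r (Rinv (pow r (mdeg c)))); first exact: Rinv_0_lt_compat.
rewrite Rmult_assoc Rinv_r ?Rmult_1_r; last lra.
rewrite (abs_subC Habs); apply: (converges_dist_le Habs (N := n) (cv_S c)) => p le_np.
apply: (Rmult_le_reg_r (pow r (mdeg c))) => //.
rewrite Rmult_assoc Rinv_l ?Rmult_1_r; last lra.
by rewrite (abs_subC Habs); have := iter_dist_le n (p - n) c; rewrite subnKC.
Qed.

Hypothesis dl_cvg0 : forall eps, Rlt R0 eps -> exists N, forall n, (N <= n)%N -> Rlt (dl n) eps.

Lemma mul_dl_cvg0 eps : Rlt R0 eps -> exists N, forall n, (N <= n)%N -> Rlt (Rmult B (dl n)) eps.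
Proof.
move=> eps_gt0; have [N small] := dl_cvg0 (Rdiv_lt_0_compat eps (Rplus B R1) eps_gt0 ltac:(lra)).
exists N => n /small lt_dl; have := dl_ge0 n.
have -> : eps = Rmult (Rplus B R1) (Rdiv eps (Rplus B R1)) by field; lra.
nra.
Qed.

Lemma iter_coef_limit : complete_abs abs -> forall c, exists l, converges abs (fun p => S p c) l.
Proof.
move=> complete c; apply: complete => eps eps_gt0.
have rc_gt0 : Rlt R0 (pow r (mdeg c)) by apply: pow_lt.
have [N small] := mul_dl_cvg0 (Rmult_lt_0_compat _ _ eps_gt0 rc_gt0).
have near n p : (N <= n)%N -> (n <= p)%N -> Rlt (abs (S p c - S n c)) eps.
  move=> le_Nn le_np; apply: (Rmult_lt_reg_r _ _ _ rc_gt0); apply: Rle_lt_trans (small n le_Nn).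
  by have := iter_dist_le n (p - n) c; rewrite subnKC.
exists N => n p le_Nn le_Np; case: (leqP n p) => [le_np|/ltnW le_pn].
  by rewrite (abs_subC Habs); exact: near.
exact: near.
Qed.

Lemma iter_limit_in_A (L : pseries F m) : (forall n, in_A abs r (S n)) ->
  (forall c, converges abs (fun p => S p c) (L c)) -> in_A abs r L.
Proof.
move=> S_in cv_S eps eps_gt0.
have [n small] := mul_dl_cvg0 eps_gt0; have [N tail_S] := S_in n _ eps_gt0.
exists N => c le_Nc; have rc_ge0 : Rle R0 (pow r (mdeg c)) by apply: pow_le; lra.
have := abs_sub_mulr_le Habs (x := L c) (y := S n c) (z := 0) rc_ge0; rewrite !subr0.
have := iter_limit_dist_le cv_S n c; have := tail_S c le_Nc; have := small n (leqnn n).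
move=> lt_Bdl lt_Sn le_LS le_L.
apply: Rle_lt_trans (le_L (Rmax (Rmult B (dl n)) (Rmult (abs (S n c)) (pow r (mdeg c)))) _ _) _.
- exact: Rle_trans le_LS (Rmax_l _ _).
- exact: Rmax_r.
- exact: Rmax_lub_lt.
Qed.

Lemma iter_limit : complete_abs abs -> (forall n, in_A abs r (S n)) ->
  exists L, (forall c, converges abs (fun p => S p c) (L c)) /\ in_A abs r L.
Proof.
move=> complete S_in; have [L cv_S] := choice _ (iter_coef_limit complete).
by exists L; split => //; exact: iter_limit_in_A.
Qed.

End IteratedProduct.

Section Factorization.
Variables (F : fieldType) (abs : F -> R).
Hypotheses (Habs : nonarch_abs abs) (complete : complete_abs abs).
Variables (m : nat) (r : nat -> R).
Hypotheses (r_val : forall i, in_value_group abs (r i))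
           (r_incr : forall i j, (i < j)%N -> Rlt (r i) (r j))
           (r_unbounded : forall M, exists N, forall i, (N <= i)%N -> Rlt M (r i)).
Variables (g U W : nat -> pseries F m).
Hypotheses (g_in : forall k, in_A abs (r k) (g k))
           (U_in : forall k, in_A abs (r k) (U k))
           (W_in : forall k, in_A abs (r k) (W k))
           (gU : forall k, g k = pmul (U k) (g k.+1))
           (UW : forall k, pmul (U k) (W k) = @pone F m).

Lemma r_gt0 i : Rlt R0 (r i).
Proof. by have [x [nz_x <-]] := r_val i; exact: abs_gt0. Qed.

Lemma r_le i j : (i <= j)%N -> Rle (r i) (r j).
Proof. by rewrite leq_eqVlt => /orP [/eqP ->|/r_incr/Rlt_le //]; exact: Rle_refl. Qed.

Lemma in_A_shift i n (f : pseries F m) : in_A abs (r (i + n)%N) f -> in_A abs (r i) f.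
Proof. by apply: (in_A_le Habs); [exact: Rlt_le (r_gt0 i) | apply: r_le; exact: leq_addr]. Qed.

Lemma U_mzero_neq0 k : U k (mzero m) <> 0.
Proof. exact: unit_mzero_neq0 (UW k). Qed.

Definition unorm k := pscale (U k (mzero m))^-1 (U k).
Definition wnorm k := pscale (U k (mzero m)) (W k).
Definition const_prod k : F := \prod_(j < k) U j (mzero m).
Definition gnorm k := pscale (const_prod k) (g k).

Lemma unorm_mzero k : unorm k (mzero m) = 1.
Proof. by rewrite /unorm /pscale mulVf //; apply/eqP; exact: U_mzero_neq0. Qed.

Lemma wnorm_mzero k : wnorm k (mzero m) = 1.
Proof. by rewrite /wnorm /pscale unit_mzero. Qed.

Lemma const_prod_neq0 k : const_prod k != 0.
Proof. by apply/prodf_neq0 => j _; apply/eqP; exact: U_mzero_neq0. Qed.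

Lemma unorm_wnorm k : pmul (unorm k) (wnorm k) = @pone F m.
Proof. by rewrite pmulZ UW mulVf ?pscale1 //; apply/eqP; exact: U_mzero_neq0. Qed.

Lemma gnorm_unorm k : gnorm k = pmul (unorm k) (gnorm k.+1).
Proof.
rewrite pmulZ /gnorm -gU /const_prod big_ord_recr /= mulrCA mulVf ?mulr1 //.
by apply/eqP; exact: U_mzero_neq0.
Qed.

Lemma gnorm_wnorm k : gnorm k.+1 = pmul (gnorm k) (wnorm k).
Proof. by rewrite (gnorm_unorm k) [pmul (unorm k) _]pmulC -pmulA unorm_wnorm pmul1r. Qed.

Lemma pweight_unorm_le1 k d : d <> mzero m -> Rle (pweight abs (r k) (unorm k) d) R1.
Proof.
move=> nz_d; have := unit_pweight_lt Habs (r_gt0 k) (U_in k) (W_in k) (UW k) nz_d.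
have U0_gt0 := abs_gt0 Habs (@U_mzero_neq0 k).
rewrite /pweight /unorm /pscale (absM Habs) (absV Habs) ?Rmult_assoc; last exact: U_mzero_neq0.
move=> lt_U; apply: Rlt_le; apply: (Rmult_lt_reg_l (abs (U k (mzero m)))) => //.
by rewrite -Rmult_assoc Rinv_r ?Rmult_1_l ?Rmult_1_r //; lra.
Qed.

Lemma pweight_wnorm_le1 k d : d <> mzero m -> Rle (pweight abs (r k) (wnorm k) d) R1.
Proof.
move=> nz_d; have WU : pmul (W k) (U k) = @pone F m by rewrite pmulC.
have := unit_pweight_lt Habs (r_gt0 k) (W_in k) (U_in k) WU nz_d.
have U0W0 : Rmult (abs (U k (mzero m))) (abs (W k (mzero m))) = R1.
  by rewrite -(absM Habs) unit_mzero ?abs1.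
have U0_gt0 := abs_gt0 Habs (@U_mzero_neq0 k).
rewrite /pweight /wnorm /pscale (absM Habs) Rmult_assoc -U0W0 => lt_W.
by apply: Rlt_le; apply: Rmult_lt_compat_l.
Qed.

Fixpoint pprod (X : nat -> pseries F m) i n :=
  if n is n'.+1 then pmul (pprod X i n') (X (i + n')%N) else @pone F m.

Lemma gnorm_pprod i n : gnorm i = pmul (pprod unorm i n) (gnorm (i + n)).
Proof.
elim: n => [|n IHn] /=; first by rewrite addn0 pmul1l.
by rewrite IHn gnorm_unorm addnS pmulA.
Qed.

Lemma pprod_unorm_wnorm i n : pmul (pprod unorm i n) (pprod wnorm i n) = @pone F m.
Proof.
elim: n => [|n IHn] /=; first exact: pmul1l.
rewrite -pmulA (pmulA (unorm _)) [pmul (unorm _) (pprod _ _ _)]pmulC -pmulA.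
by rewrite unorm_wnorm pmul1r IHn.
Qed.

Definition ratio i n := Rdiv (r i) (r (i + n)%N).

Lemma ratio_ge0 i n : Rle R0 (ratio i n).
Proof. by apply: Rlt_le; apply: Rdiv_lt_0_compat; exact: r_gt0. Qed.

Lemma ratio_le1 i n : Rle (ratio i n) R1.
Proof.
have le_r := r_le (leq_addr n i); have r_pos := r_gt0 (i + n).
rewrite /ratio /Rdiv; apply: (Rmult_le_reg_r (r (i + n)%N)) => //.
by rewrite Rmult_assoc Rinv_l; lra.
Qed.

Lemma ratio_noninc i n p : (n <= p)%N -> Rle (ratio i p) (ratio i n).
Proof.
move=> le_np; apply: Rmult_le_compat_l; first exact: Rlt_le (r_gt0 i).
by apply: Rinv_le_contravar; [exact: r_gt0 | apply: r_le; rewrite leq_add2l].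
Qed.

Lemma ratio_cvg0 i eps : Rlt R0 eps -> exists N, forall n, (N <= n)%N -> Rlt (ratio i n) eps.
Proof.
move=> eps_gt0; have [N big] := r_unbounded (Rdiv (r i) eps).
exists N => n le_Nn; have := big (i + n)%N (leq_trans le_Nn (leq_addl _ _)).
have := r_gt0 i; have := r_gt0 (i + n); rewrite /ratio => *.
apply: (Rmult_lt_reg_r (r (i + n)%N)) => //; rewrite /Rdiv Rmult_assoc Rinv_l ?Rmult_1_r; last lra.
have -> : r i = Rmult eps (Rdiv (r i) eps) by field; lra.
exact: Rmult_lt_compat_l.
Qed.

Lemma pweight_ratio_le i n f d : d <> mzero m -> Rle (pweight abs (r (i + n)) f d) R1 ->
  Rle (pweight abs (r i) f d) (ratio i n).
Proof.
by move=> nz_d le_f1; apply: (pweight_shrink Habs) => //; [exact: r_gt0 | exact: r_le (leq_addr _ _)].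
Qed.

Lemma in_A_gnorm k : in_A abs (r k) (gnorm k).
Proof. exact: (in_A_pscale Habs). Qed.

Lemma in_A_unorm k : in_A abs (r k) (unorm k).
Proof. exact: (in_A_pscale Habs). Qed.

Lemma in_A_wnorm k : in_A abs (r k) (wnorm k).
Proof. exact: (in_A_pscale Habs). Qed.

Section NormalizedProduct.
Variable X : nat -> pseries F m.
Hypotheses (X_in : forall k, in_A abs (r k) (X k)) (X_mzero : forall k, X k (mzero m) = 1)
           (X_le1 : forall k d, d <> mzero m -> Rle (pweight abs (r k) (X k) d) R1).

Lemma in_A_pprod i n : in_A abs (r i) (pprod X i n).
Proof.
elim: n => [|n IHn] /=; first exact: (in_A_pone Habs).
apply: (in_A_pmul Habs) => //; first exact: Rlt_le (r_gt0 i).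
exact: in_A_shift (X_in _).
Qed.

Lemma pprod_limit i : exists V,
  (forall c, converges abs (fun p => pprod X i p c) (V c)) /\ in_A abs (r i) V.
Proof.
apply: (@iter_limit _ _ Habs _ _ _ (fun n => X (i + n)%N) R1 (ratio i)) => //.
- exact: r_gt0.
- exact: Rle_0_1.
- exact: ratio_ge0.
- exact: ratio_le1.
- exact: ratio_noninc.
- by move=> n d nz_d; apply: pweight_ratio_le => //; exact: X_le1.
- by move=> c; exact: pweight_pone_le1.
- exact: ratio_cvg0.
- exact: in_A_pprod.
Qed.

End NormalizedProduct.

Lemma gnorm_limit i : exists L,
  (forall c, converges abs (fun p => gnorm (i + p) c) (L c)) /\ in_A abs (r i) L.
Proof.
have [B [B_ge0 le_B]] := in_A_bounded (Rlt_le _ _ (r_gt0 i)) (in_A_gnorm i).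
apply: (@iter_limit _ _ Habs _ _ _ (fun n => wnorm (i + n)) B (ratio i)) => //.
- exact: r_gt0.
- exact: ratio_ge0.
- exact: ratio_le1.
- exact: ratio_noninc.
- by move=> n; rewrite addnS gnorm_wnorm.
- by move=> n; exact: wnorm_mzero.
- by move=> n d nz_d; apply: pweight_ratio_le => //; exact: pweight_wnorm_le1.
- by move=> c; rewrite addn0.
- exact: ratio_cvg0.
- by move=> n; exact: in_A_shift (in_A_gnorm _).
Qed.

Lemma factorization : exists G : pseries F m, entire abs G /\
  exists v : nat -> pseries F m, forall i, unit_A abs (r i) (v i) /\ g i = pmul G (v i).
Proof.
have [G [cv_G _]] := gnorm_limit 0.
have cv_G_shift i c : converges abs (fun p => gnorm (i + p) c) (G c) := converges_shift i (cv_G c).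
have G_in i : in_A abs (r i) G.
  have [L [cv_L L_in]] := gnorm_limit i.
  suff -> : G = L by [].
  apply: functional_extensionality => c; exact: (converges_unique Habs (cv_G_shift i c) (cv_L c)).
exists G; split.
  move=> s [x [_ <-]]; have [N big] := r_unbounded (abs x).
  by apply: (in_A_le Habs) (G_in N); [exact: abs_ge0 | exact: Rlt_le (big N (leqnn N))].
have [V V_lim] := choice _ (pprod_limit in_A_unorm unorm_mzero pweight_unorm_le1).
have [W' W'_lim] := choice _ (pprod_limit in_A_wnorm wnorm_mzero pweight_wnorm_le1).
exists (fun i => pscale (const_prod i)^-1 (V i)) => i.
have [cv_V V_in] := V_lim i; have [cv_W' W'_in] := W'_lim i.
split.
  split; first exact: (in_A_pscale Habs).
  exists (pscale (const_prod i) (W' i)); split; first exact: (in_A_pscale Habs).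
  rewrite pmulZ mulVf ?const_prod_neq0 // pscale1.
  exact: (converges_pmul_const Habs cv_V cv_W' (pprod_unorm_wnorm i)).
have gnorm_VG : pmul (V i) G = gnorm i.
  by apply: (converges_pmul_const Habs cv_V (cv_G_shift i)) => n; rewrite -gnorm_pprod.
rewrite pmulC pmulZl gnorm_VG; apply: functional_extensionality => c.
by rewrite /pscale /gnorm /pscale mulrA mulVf ?const_prod_neq0 ?mul1r.
Qed.

End Factorization.

Local Close Scope ring_scope.

Theorem mainTheorem4
  (F : closedFieldType) (abs : F -> R)
  (Habs : nonarch_abs abs) (Hnontriv : nontrivial_abs abs) (Hcompl : complete_abs abs)
  (m : nat)
  (r : nat -> R)
  (Hr_val : forall i : nat, in_value_group abs (r i))
  (Hr_incr : forall i j : nat, leq (S i) j -> Rlt (r i) (r j))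
  (Hr_inf : forall M : R, exists N : nat, forall i : nat, leq N (i) -> Rlt M (r i))
  (g : nat -> pseries F m)
  (Hg : forall i : nat, in_A abs (r i) (g i))
  (u : nat -> nat -> pseries F m)
  (Hu_unit : forall i j : nat, leq (S i) j -> unit_A abs (r i) (u i j))
  (Hu_eq : forall i j : nat, leq (S i) j -> g i = pmul (u i j) (g j)) :
  exists G : pseries F m, entire abs G /\
    exists v : nat -> pseries F m,
      forall i : nat, unit_A abs (r i) (v i) /\ g i = pmul G (v i).
Proof.
have inverse k : exists w, in_A abs (r k) w /\ pmul (u k k.+1) w = @pone F m.
  by have [_] := Hu_unit k k.+1 (leqnn _).
have [W W_inv] := choice _ inverse.
apply: (factorization Habs Hcompl Hr_val Hr_incr Hr_inf Hg (U := fun k => u k k.+1) (W := W)).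
- by move=> k; have [] := Hu_unit k k.+1 (leqnn _).
- by move=> k; case: (W_inv k).
- by move=> k; apply: Hu_eq.
- by move=> k; case: (W_inv k).
Qed.
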